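(* Let $S$ be a countable set (with its power set as $\sigma$-field) on which $G$ acts measurably. Then $G$ acts properly on $S$ if and only if $0<\lambda(G_{s,s})<\infty$ for all $s\in S$. In this case $$\Delta^*(s)=\frac{\lambda(G_{s,s})}{\lambda(G_{\beta(s),\beta(s)})}=\frac{|G_{s,s}\beta(s)|}{|G_{\beta(s),\beta(s)}s|},\qquad s\in S,$$ and either all orbits are infinite or all orbits are finite.
   Context: $G$ is a locally compact second countable Hausdorff group with left Haar measure $\lambda$ and modular function $\Delta$ ($\int f(gh)\lambda(dg)=\Delta(h^{-1})\int f\,d\lambda$). $G_{s,t}=\{g:gs=t\}$. Proper action: with $\mu_s$ the image of $\lambda$ under $g\mapsto gs$, there is a partition $B_1,B_2,\dots$ of $S$ with $\mu_s(B_n)<\infty$ for all $s,n$. $O$ is a system of representatives of the orbits, $\beta(s)\in O$ the representative of $Gs$, and $\Delta^*(s):=\Delta(g^{-1})$ for any $g$ with $g\beta(s)=s$ (well defined under properness). $|A|$ is cardinality and $G_{s,s}t=\{gt:g\in G_{s,s}\}$. *)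

From HB Require Import structures.
From mathcomp Require Import all_boot all_order all_algebra.
From mathcomp Require Import finmap.
From mathcomp Require Import all_classical all_reals all_analysis.
From mathcomp Require Import lebesgue_measure measurable_realfun lebesgue_integral.
Set Implicit Arguments. Unset Strict Implicit. Unset Printing Implicit Defensive.
Import Order.TTheory GRing.Theory Num.Theory.
Local Open Scope classical_set_scope.
Local Open Scope ring_scope.

(* A type carrying both a topology and a sigma-algebra (the Borel condition
   linking them is imposed separately by [is_borel]). *)
#[short(type="topMeasurableType")]
HB.structure Definition TopMeasurable d :=
  {T of Measurable d T & Topological T}.

Definition is_borel d (G : topMeasurableType d) : Prop :=
  (@measurable d G) = smallest (sigma_algebra [set: G]) open.

Definition is_lcsc_group d (G : topMeasurableType d)
    (mul : G -> G -> G) (inv : G -> G) (one : G) : Prop :=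
  (forall x y z, mul x (mul y z) = mul (mul x y) z) /\
  (forall x, mul one x = x /\ mul x one = x) /\
  (forall x, mul (inv x) x = one /\ mul x (inv x) = one) /\
  continuous (fun p : G * G => mul p.1 p.2) /\
  continuous inv /\
  hausdorff_space G /\
  locally_compact [set: G] /\
  @second_countable G.

Definition is_left_Haar d (G : topMeasurableType d) (R : realType)
    (mul : G -> G -> G) (lam : {measure set G -> \bar R}) : Prop :=
  [/\ (forall g (A : set G), measurable A -> lam [set mul g x | x in A] = lam A),
      (forall K : set G, compact K -> (lam K < +oo)%E) &
      (forall U : set G, open U -> U !=set0 -> (0 < lam U)%E)].

Definition is_modular_function d (G : topMeasurableType d) (R : realType)
    (mul : G -> G -> G) (inv : G -> G) (lam : {measure set G -> \bar R})
    (Delta : G -> R) : Prop :=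
  forall (h : G) (f : G -> \bar R), measurable_fun [set: G] f ->
    (forall x, (0 <= f x)%E) ->
    (\int[lam]_x f (mul x h) = (Delta (inv h))%:E * \int[lam]_x f x)%E.

Definition is_action (G S : Type) (mul : G -> G -> G) (one : G)
    (act : G -> S -> S) : Prop :=
  (forall s, act one s = s) /\
  (forall g h s, act (mul g h) s = act g (act h s)).

Definition prod_powerset_measurable d (G : topMeasurableType d) (S : Type)
    (C : set (G * S)) : Prop :=
  smallest (sigma_algebra [set: G * S])
    [set A `*` B | A in [set A : set G | measurable A] & B in [set: set S]] C.

Definition measurable_action d (G : topMeasurableType d) (S : Type)
    (act : G -> S -> S) : Prop :=
  forall B : set S, prod_powerset_measurable [set p : G * S | B (act p.1 p.2)].

Definition Gst (G S : Type) (act : G -> S -> S) (s t : S) : set G :=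
  [set g | act g s = t].

Definition proper_action d (G : topMeasurableType d) (R : realType) (S : Type)
    (lam : {measure set G -> \bar R}) (act : G -> S -> S) : Prop :=
  exists B : nat -> set S,
    [/\ trivIset [set: nat] B, \bigcup_n B n = [set: S] &
        forall s n, (lam [set g | B n (act g s)] < +oo)%E].

Definition act_orbit (G S : Type) (act : G -> S -> S) (s : S) : set S :=
  [set act g s | g in [set: G]].

Definition orbit_repr (G S : Type) (act : G -> S -> S) (beta : S -> S) : Prop :=
  (forall s, exists g, act g (beta s) = s) /\
  (forall g s, beta (act g s) = beta s).

From HB Require Import structures.
From mathcomp Require Import all_boot all_order all_algebra.
From mathcomp Require Import finmap.
From mathcomp Require Import all_classical all_reals all_analysis.
From mathcomp Require Import lebesgue_measure measurable_realfun lebesgue_integral.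
Import Order.TTheory GRing.Theory Num.Theory.
Set Implicit Arguments. Unset Strict Implicit. Unset Printing Implicit Defensive.
Local Open Scope classical_set_scope.
Local Open Scope ring_scope.

(* For a subgroup P of G and s in S, the sets P `&` G_{s,t} (t in the P-orbit of
   s) partition P and are left translates of P `&` G_{s,s}; as S is countable,
   lam P = |P s| * lam (P `&` G_{s,s}).  For P = G this gives
   lam G = |G s| * lam G_{s,s}: stabilizers have positive measure, properness
   amounts to their finiteness, and all orbits are finite exactly when
   lam G < +oo.  For P = G_{s,s} and P = G_{b,b} (b = beta s) both stabilizer
   measures become multiples of lam (G_{s,s} `&` G_{b,b}), by |G_{s,s} b| and
   |G_{b,b} s|, while the modular function gives
   lam G_{s,s} = Delta (g^-1) lam G_{b,b}, since G_{s,b} = G_{b,b} g^-1 is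
   also the left translate g^-1 G_{s,s}. *)

Section esum_cst.
Context {R : realType} {T : choiceType}.
Local Open Scope ereal_scope.

Lemma fsbig_cst (B : {fset T}) (r : R) :
  \sum_(t \in [set` B]) r%:E = (r *+ #|` B|)%:E.
Proof.
by rewrite fsbig_finite // set_fsetK sumEFin big_const_seq count_predT iter_addr addr0.
Qed.

Lemma esum_cst_finite_set (A : set T) (r : R) : (0 <= r)%R -> finite_set A ->
  \esum_(t in A) r%:E = (r *+ #|` fset_set A|)%:E.
Proof. by move=> r_ge0 finA; rewrite esum_fset // -fsbig_cst fset_setK. Qed.

Lemma esum_cst_infinite_set (A : set T) (r : R) : (0 < r)%R -> infinite_set A ->
  \esum_(t in A) r%:E = +oo.
Proof.
move=> r_gt0 infA; apply/eqyP => x x_gt0.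
have [B BA nB] := infinite_set_fset (Num.truncn (x / r)).+1 infA.
apply: esum_ge; exists [set` B]; first by split => //; exact: finite_fset.
rewrite fsbig_cst lee_fin -mulr_natr -ler_pdivrMl // ltW //.
by apply: (lt_le_trans (truncnS_gt _)); rewrite ler_nat mulrC.
Qed.

Lemma esum_cst_lt_pinfty_finite (A : set T) (r : R) : (0 < r)%R ->
  \esum_(t in A) r%:E < +oo -> finite_set A.
Proof.
move=> r_gt0 lt_oo; apply: contrapT => infA.
by move: lt_oo; rewrite esum_cst_infinite_set // ltxx.
Qed.

End esum_cst.

Lemma measure_esum_fibers d (T : measurableType d) (R : realType)
    (mu : {measure set T -> \bar R}) (S : countType) (f : T -> S) (P : set T) :
  (forall t, measurable (P `&` f @^-1` [set t])) ->
  mu P = (\esum_(t in f @` P) mu (P `&` f @^-1` [set t]))%E.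
Proof.
move=> mfib.
pose F n := if pickle_inv n is Some t then P `&` f @^-1` [set t] else set0.
have mF n : measurable (F n) by rewrite /F; case: pickle_inv.
have F0 n : ~ range (@choice.pickle S) n -> F n = set0.
  rewrite /F; case En: (pickle_inv n) => [t|] // nr.
  by have := @pickle_invK S n; rewrite En /= => Kn; case: nr; exists t.
have tF : trivIset setT F.
  move=> n m _ _ [x []]; rewrite /F.
  case En: (pickle_inv n) => [t|] //; case Em: (pickle_inv m) => [t'|] // [_ ft] [_ ft'].
  have := @pickle_invK S n; have := @pickle_invK S m; rewrite En Em /= => <- <-.
  by rewrite -ft -ft'.
have PF : P = \bigcup_n F n.
  apply/seteqP; split=> [x Px|x [n _]]; last by rewrite /F; case: pickle_inv => // t [].
  by exists (choice.pickle (f x)) => //; rewrite /F pickleK_inv.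
rewrite [in LHS]PF measure_bigcup // nneseries_esum //.
rewrite (_ : [set x | x \in setT] = setT); last first.
  by apply/seteqP; split=> x; rewrite /= ?inE.
transitivity (\esum_(n in range (@choice.pickle S)) mu (F n)).
  rewrite [RHS]esum_mkcond; apply: eq_esum => n _.
  by case: ifPn => // /negP nr; rewrite F0 ?measure0 // => r; apply: nr; rewrite inE.
rewrite esum_image; last by move=> x y _ _; apply: (pcan_inj (@pickleK_inv S)).
rewrite [RHS]esum_mkcond; apply: eq_esum => t _; rewrite /F pickleK_inv.
case: ifPn => // /negP nfP; rewrite (_ : _ `&` _ = set0) ?measure0 //.
by apply/seteqP; split=> x // [Px fx]; apply: nfP; rewrite inE; exists x.
Qed.

Lemma prod_powerset_measurable_section d (G : topMeasurableType d) (S : Type)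
    (C : set (G * S)) (s : S) :
  prod_powerset_measurable C -> measurable [set g | C (g, s)].
Proof.
move=> mC; apply: (@smallest_sub _ _ _ [set C | measurable [set g | C (g, s)]] _ _ C mC).
  split=> /= [|A mA|F mF].
  - by rewrite (_ : [set g | set0 (g, s)] = set0).
  - rewrite (_ : [set g | (setT `\` A) (g, s)] = ~` [set g | A (g, s)]).
      exact: measurableC.
    by apply/seteqP; split=> x /=; [case|split].
  - rewrite (_ : [set g | (\bigcup_k F k) (g, s)] = \bigcup_k [set g | F k (g, s)]).
      exact: bigcupT_measurable.
    by apply/seteqP; split=> x /=.
move=> _ [A mA [B _ <-]] /=.
have [Bs|Bs] := pselect (B s).
  by rewrite (_ : [set g | (A `*` B) (g, s)] = A) //; apply/seteqP; split=> x /=; [case|].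
by rewrite (_ : [set g | (A `*` B) (g, s)] = set0) //; apply/seteqP; split=> x //= [].
Qed.

Definition group_law (G : Type) (mul : G -> G -> G) (inv : G -> G) (one : G) :=
  [/\ forall x y z, mul x (mul y z) = mul (mul x y) z,
      forall x, mul one x = x,
      forall x, mul (inv x) x = one &
      forall x, mul x (inv x) = one].

Lemma lcsc_group_law d (G : topMeasurableType d) (mul : G -> G -> G)
    (inv : G -> G) (one : G) :
  is_lcsc_group mul inv one -> group_law mul inv one.
Proof. by case=> mulA [mul1 [mulV _]]; split=> // x; [case: (mul1 x)|case: (mulV x)..]. Qed.

Section stabilizer_measure.
Context d (G : topMeasurableType d) (R : realType) (mul : G -> G -> G)
  (inv : G -> G) (one : G) (lam : {measure set G -> \bar R})
  (S : countType) (act : G -> S -> S).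
Hypothesis group_mul : group_law mul inv one.
Hypothesis act_mul : is_action mul one act.
Hypothesis lam_mulg : forall g A, measurable A -> lam [set mul g x | x in A] = lam A.
Hypothesis act_meas : measurable_action act.

Local Notation Gst := (Gst act).

Definition mulV_closed (P : set G) :=
  (forall a b, P a -> P b -> P (mul a b)) /\ (forall a, P a -> P (inv a)).

Lemma actK g : cancel (act g) (act (inv g)).
Proof.
have [_ mul1g mulVg _] := group_mul; have [act1 actM] := act_mul.
by move=> s; rewrite -actM mulVg act1.
Qed.

Lemma measurable_act_preimage (C : set S) s : measurable [set g | C (act g s)].
Proof. exact: prod_powerset_measurable_section s (act_meas C). Qed.

Lemma measurable_Gst s t : measurable (Gst s t).
Proof. exact: measurable_act_preimage [set t] s. Qed.

Lemma mulV_closedT : mulV_closed setT.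
Proof. by []. Qed.

Lemma mulV_closed_Gst s : mulV_closed (Gst s s).
Proof.
have [_ actM] := act_mul.
by split=> [a b ha hb|a ha]; rewrite /Gst/= ?actM ?hb ?ha // -{1}ha actK.
Qed.

Lemma setI_Gst_lcoset (P : set G) h s t : mulV_closed P -> P h -> act h s = t ->
  P `&` Gst s t = [set mul h x | x in P `&` Gst s s].
Proof.
have [mulA mul1g _ mulgV] := group_mul; have [_ actM] := act_mul.
move=> [PM PV] Ph hst; apply/seteqP; split=> [y [Py yt]|_ [x [Px xs] <-]].
  exists (mul (inv h) y); last by rewrite mulA mulgV mul1g.
  split; first exact: PM (PV _ Ph) Py.
  by rewrite /Gst/= actM yt -hst actK.
by split; [exact: PM | rewrite /Gst/= actM xs].
Qed.

Lemma measure_setI_Gst (P : set G) s t : measurable P -> mulV_closed P ->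
  (exists2 h, P h & act h s = t) -> lam (P `&` Gst s t) = lam (P `&` Gst s s).
Proof.
move=> mP PmulV [h Ph hst]; rewrite (setI_Gst_lcoset PmulV Ph hst).
exact/lam_mulg/measurableI/measurable_Gst.
Qed.

Lemma measure_subgroup_esum (P : set G) s : measurable P -> mulV_closed P ->
  lam P = (\esum_(t in [set act h s | h in P]) lam (P `&` Gst s s))%E.
Proof.
move=> mP PmulV; rewrite (measure_esum_fibers lam (f := act^~ s)); last first.
  by move=> t; exact/measurableI/measurable_Gst.
by apply: eq_esum => _ [h Ph <-]; apply: measure_setI_Gst => //; exists h.
Qed.

Lemma measure_setT_esum s :
  lam setT = (\esum_(t in act_orbit act s) lam (Gst s s))%E.
Proof. by rewrite -[Gst s s]setTI; exact: measure_subgroup_esum mulV_closedT. Qed.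

Local Open Scope ereal_scope.

Lemma measure_Gst_gt0 s : 0 < lam setT -> 0 < lam (Gst s s).
Proof.
rewrite !lt0e !measure_ge0 !andbT; apply: contraNneq => stab0.
by rewrite (measure_setT_esum s) stab0 esum1.
Qed.

Lemma proper_actionP : proper_action lam act <-> forall s, lam (Gst s s) < +oo.
Proof.
split=> [[B [_ covB finB]] s|stab_fin].
  have [n _ Bns] : (\bigcup_n B n) s by rewrite covB.
  apply: le_lt_trans (finB s n); apply: le_measure; rewrite ?inE.
  - exact: measurable_Gst.
  - exact: measurable_act_preimage.
  - by move=> g; rewrite /Gst/= => ->.
exists (fun n => [set x | choice.pickle x = n]); split.
- by move=> n m _ _ [x [/= <- <-]].
- by apply/seteqP; split=> // x _; exists (choice.pickle x).
move=> s n; have [[h hsn]|nhsn] := pselect (exists h, choice.pickle (act h s) = n).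
  rewrite (_ : [set g | _] = setT `&` Gst s (act h s)); last first.
    apply/seteqP; split=> g /= => [gsn|[_ ->] //]; split => //.
    by apply: (pcan_inj (@pickleK_inv S)); rewrite gsn hsn.
  by rewrite measure_setI_Gst //; [rewrite setTI; exact: stab_fin | exists h].
rewrite (_ : [set g | _] = set0) ?measure0 //.
by apply/seteqP; split=> g //= gsn; apply: nhsn; exists g.
Qed.

Lemma act_orbit_finite_dichotomy :
  (forall s, 0 < lam (Gst s s) < +oo) ->
  (forall s, finite_set (act_orbit act s)) \/
  (forall s, infinite_set (act_orbit act s)).
Proof.
move=> stab_pos_fin.
have stabE s : lam (Gst s s) = (fine (lam (Gst s s)))%:E.
  by have /andP[? ?] := stab_pos_fin s; rewrite fineK // gt0_fin_numE.
have stab_gt0 s : (0 < fine (lam (Gst s s)))%R.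
  by rewrite -lte_fin -stabE; case/andP: (stab_pos_fin s).
have [lamT_fin|lamT_inf] := boolP (lam setT < +oo); [left|right] => s.
  by apply: (esum_cst_lt_pinfty_finite (stab_gt0 s)); rewrite -stabE -measure_setT_esum.
move=> orb_fin; move: lamT_inf; rewrite (measure_setT_esum s) stabE.
by rewrite esum_cst_finite_set ?ltry // ltW.
Qed.

Lemma measure_Gst_card u t : 0 < lam (Gst u u) < +oo ->
  let k := fine (lam (Gst u u `&` Gst t t)) in
  let A := [set act h t | h in Gst u u] in
  [/\ (0 < k)%R, finite_set A & lam (Gst u u) = (k *+ #|` fset_set A|)%:E].
Proof.
move=> /andP[stab_gt0 stab_fin] k A.
have stabE : lam (Gst u u) = \esum_(_ in A) lam (Gst u u `&` Gst t t).
  exact/measure_subgroup_esum/mulV_closed_Gst/measurable_Gst.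
have K_fin : lam (Gst u u `&` Gst t t) < +oo.
  apply: le_lt_trans stab_fin; apply: le_measure; last exact: subIsetl.
    by rewrite inE; apply: measurableI; exact: measurable_Gst.
  by rewrite inE; exact: measurable_Gst.
have K_gt0 : 0 < lam (Gst u u `&` Gst t t).
  rewrite lt0e measure_ge0 andbT; apply: contraTneq stab_gt0 => K0.
  by rewrite stabE K0 esum1 // ltxx.
have KE : lam (Gst u u `&` Gst t t) = k%:E by rewrite fineK // gt0_fin_numE.
have k_gt0 : (0 < k)%R by rewrite -lte_fin -KE.
rewrite KE in stabE; have finA : finite_set A.
  by apply: (esum_cst_lt_pinfty_finite k_gt0); rewrite -stabE.
by split => //; rewrite stabE esum_cst_finite_set // ltW.
Qed.

Lemma measure_Gst_modular (Delta : G -> R) g t u :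
  is_modular_function mul inv lam Delta -> act g t = u ->
  lam (Gst u u) = (Delta (inv g))%:E * lam (Gst t t).
Proof.
have [_ actM] := act_mul; move=> modDelta gtu.
have mind : measurable_fun setT (fun x => (\1_(Gst t t) x : R)%:E).
  exact/measurable_EFinP/measurable_indic/measurable_Gst.
have ind_ge0 x : 0 <= (\1_(Gst t t) x : R)%:E by rewrite lee_fin.
have := modDelta g _ mind ind_ge0.
have preE : (fun x => Gst t t (mul x g)) = Gst u t.
  by apply/funext => x; rewrite /Gst/= actM gtu.
rewrite integral_indic //; last by rewrite preE; exact: measurable_Gst.
rewrite preE setIT integral_indic //; last exact: measurable_Gst.
rewrite setIT => <-.
have ginv_ut : act (inv g) u = t by rewrite -gtu actK.
rewrite -[Gst u t]setTI (setI_Gst_lcoset mulV_closedT I ginv_ut) setTI.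
by rewrite lam_mulg //; exact: measurable_Gst.
Qed.

End stabilizer_measure.

Theorem lemma2p7 (d : measure_display) (G : topMeasurableType d) (R : realType)
  (mul : G -> G -> G) (inv : G -> G) (one : G)
  (lam : {measure set G -> \bar R}) (Delta : G -> R)
  (S : countType) (act : G -> S -> S) (beta : S -> S) :
  is_borel G ->
  is_lcsc_group mul inv one ->
  is_left_Haar mul lam ->
  is_modular_function mul inv lam Delta ->
  is_action mul one act ->
  measurable_action act ->
  orbit_repr act beta ->
  (proper_action lam act <->
     (forall s, (0 < lam (Gst act s s))%E /\ (lam (Gst act s s) < +oo)%E))
  /\
  (proper_action lam act ->
     (forall (s : S) (g : G), act g (beta s) = s ->
        let A := [set act h (beta s) | h in Gst act s s] in
        let B := [set act h s | h in Gst act (beta s) (beta s)] in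
        [/\ Delta (inv g) = fine (lam (Gst act s s)) /
                            fine (lam (Gst act (beta s) (beta s))),
            finite_set A, finite_set B &
            Delta (inv g) = (#|` fset_set A|%:R / #|` fset_set B|%:R)])
     /\
     ((forall s, finite_set (act_orbit act s)) \/
      (forall s, infinite_set (act_orbit act s)))).
Proof.
move=> _ /lcsc_group_law Ggroup [lam_mulg _ lam_open_gt0] modDelta
  Gact act_meas _.
have lamT_gt0 : (0 < lam setT)%E.
  by apply: lam_open_gt0; [exact: openT | exists one].
have stab_gt0 s := measure_Gst_gt0 Ggroup Gact lam_mulg act_meas s lamT_gt0.
have properE : proper_action lam act <->
    forall s, (0 < lam (Gst act s s))%E /\ (lam (Gst act s s) < +oo)%E.
  rewrite (proper_actionP Ggroup Gact lam_mulg act_meas).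
  by split=> stab_fin s; [split; [exact: stab_gt0 | exact: stab_fin] | case: (stab_fin s)].
split=> // /properE stab_fin.
have stab_pos_fin s : (0 < lam (Gst act s s) < +oo)%E.
  by case: (stab_fin s) => -> ->.
split=> [s g gbs A B|]; last first.
  exact: act_orbit_finite_dichotomy Ggroup Gact lam_mulg act_meas stab_pos_fin.
have [k_gt0 finA stab_sE] :=
  measure_Gst_card Ggroup Gact lam_mulg act_meas (beta s) (stab_pos_fin s).
have [_ finB] := measure_Gst_card Ggroup Gact lam_mulg act_meas s (stab_pos_fin (beta s)).
rewrite setIC => stab_bE.
set k := fine _ in k_gt0 stab_sE stab_bE.
have kb_gt0 : (0 < k *+ #|` fset_set B|)%R.
  by rewrite -lte_fin -stab_bE; case/andP: (stab_pos_fin (beta s)).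
have DeltaE : Delta (inv g) = (k *+ #|` fset_set A|) / (k *+ #|` fset_set B|).
  have := measure_Gst_modular Ggroup Gact lam_mulg act_meas modDelta gbs.
  by rewrite stab_sE stab_bE -EFinM => -[->]; rewrite mulfK // gt_eqF.
split=> //; first by rewrite stab_sE stab_bE.
rewrite DeltaE -[k *+ #|` fset_set A|]mulr_natr -[k *+ #|` fset_set B|]mulr_natr.
by rewrite invfM mulrACA divff ?mul1r // gt_eqF.
Qed.
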